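(* Let $\lambda>0$ be fixed, and assume there are constants $C_d>C_u>0$ and events $\mathcal{B}_N$ on the predictor sample, with $\mathbb{P}(\mathcal{B}_N)\to1$, such that on $\mathcal{B}_N$, with $K_0=\lfloor\ln(N)/(2C_d+1)\rfloor$, the eigenvalues $\widehat\mu_1\ge\dots\ge\widehat\mu_N$ of the Gram matrix satisfy $$\sum_{k=K_0}^N\widehat\mu_k\le\sum_{k=K_0}^Ne^{-C_uk}\quad\text{and}\quad\widehat\mu_{K_0}\ge e^{-C_dK_0}.$$ Then for $m=m(N)=N^{\frac14\frac{C_u+C_d+1/2}{C_d+1}}$, on $\mathcal{B}_N$, $$\frac1{\sqrt N}\sum_{\ell=1}^N\Big(1-\Big(1-\frac{\widehat\mu_\ell}{\widehat\mu_\ell+\lambda}\Big)^m\Big)^2\to0\qquad(N\to\infty).$$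
   Context: Gram matrix: $G_{ij}=K(\widetilde{\mathbf{x}}_i,\widetilde{\mathbf{x}}_j)/N$ for the additive kernel $K(\mathbf{x},\mathbf{x}')=\sum_{j=1}^d\exp(-|x_j-x_j'|^2/(2\varsigma_j))$ evaluated at the sample $\widetilde{\mathbf{x}}_1,\dots,\widetilde{\mathbf{x}}_N\in\mathbb{R}^d$. *)

From HB Require Import structures.
From mathcomp Require Import all_boot all_order all_algebra.
From mathcomp Require Import all_classical all_reals all_analysis.
Set Implicit Arguments. Unset Strict Implicit. Unset Printing Implicit Defensive.
Import Order.TTheory GRing.Theory Num.Theory.
Local Open Scope ring_scope.

Definition addkernel (R : realType) (d : nat) (s : 'I_d -> R)
    (x x' : 'rV[R]_d) : R :=
  \sum_(j < d) expR (- ((x 0 j - x' 0 j) ^+ 2) / (2 * s j)).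

Definition gram (R : realType) (d N : nat) (s : 'I_d -> R)
    (x : 'I_N -> 'rV[R]_d) : 'M[R]_N :=
  \matrix_(i, j) (addkernel s (x i) (x j) / N%:R).

(* Only the values mu 1, ..., mu N are meaningful. *)
Definition sorted_eigenvalues (R : realType) (N : nat) (G : 'M[R]_N)
    (mu : nat -> R) : Prop :=
  (forall k, (1 <= k)%N -> (k < N)%N -> mu k.+1 <= mu k) /\
  exists U : 'M[R]_N, U *m U^T = 1%:M /\
    G = U^T *m diag_mx (\row_(i < N) mu i.+1) *m U.

Definition K0 (R : realType) (Cd : R) (N : nat) : nat :=
  Num.truncn (ln (N%:R : R) / (2 * Cd + 1)).

Definition mN (R : realType) (Cu Cd : R) (N : nat) : R :=
  (N%:R : R) `^ (4^-1 * ((Cu + Cd + 2^-1) / (Cd + 1))).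

Definition effquant (R : realType) (lam : R) (m : R) (N : nat)
    (mu : nat -> R) : R :=
  (Num.sqrt (N%:R : R))^-1 *
  \sum_(1 <= l < N.+1) (1 - (1 - mu l / (mu l + lam)) `^ m) ^+ 2.

From HB Require Import structures.
From mathcomp Require Import all_boot all_order all_algebra.
From mathcomp Require Import all_classical all_reals all_analysis.
From mathcomp Require Import ring lra.
Set Implicit Arguments. Unset Strict Implicit. Unset Printing Implicit Defensive.
Import Order.TTheory GRing.Theory Num.Theory.
Import numFieldNormedType.Exports.
Local Open Scope classical_set_scope.
Local Open Scope ring_scope.

(* The Gram matrix of the additive Gaussian kernel is positive semidefinite:
   exp(-(a - b)^2 / c) = exp(-a^2 / c) exp(-b^2 / c) exp(2ab / c), and every
   coefficient of the power series of exp(t a_i a_j) in t >= 0 is a Gram form.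
   Hence the eigenvalues mu_l are nonnegative, and each summand
   f_l = (1 - (lam / (mu_l + lam))^m)^2 lies in [0, 1] and is at most
   (m mu_l / lam)^2, since 1 - (1 + x)^(-m) <= m ln (1 + x) <= m x.
   Split the sum at K = K0 ~ ln N / (2 Cd + 1).  The first K terms contribute at
   most K / sqrt N = O(ln N / sqrt N).  By the tail hypothesis the others
   contribute at most (m / lam)^2 (e^(-Cu K) / (1 - e^(-Cu)))^2 / sqrt N, and
   the exponent of m is chosen so that this is O(N^(-(Cu + 1/2) / (2 Cd + 2))).
   Both are O(1 / ln N). *)

Section PositiveSemidefinite.
Variable R : realType.

Definition psd {n} (G : 'M[R]_n) : Prop :=
  forall u : 'I_n -> R, 0 <= \sum_i \sum_j u i * u j * G i j.

Lemma qform_exp_coeff n (u a : 'I_n -> R) (t : R) k :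
  \sum_i \sum_j u i * u j * exp_coeff (t * a i * a j) k
  = t ^+ k / k`!%:R * (\sum_i u i * a i ^+ k) ^+ 2.
Proof.
rewrite expr2 mulr_suml big_distrr /=; apply: eq_bigr => i _.
rewrite mulr_sumr big_distrr /=; apply: eq_bigr => j _.
rewrite /exp_coeff /= !exprMn; ring.
Qed.

Lemma psd_expR_mul n (a : 'I_n -> R) (t : R) : 0 <= t ->
  psd (\matrix_(i < n, j < n) expR (t * a i * a j)).
Proof.
move=> t_ge0 u; under eq_bigr do under eq_bigr do rewrite mxE.
pose S k := \sum_i \sum_j u i * u j * series (exp_coeff (t * a i * a j)) k.
have cvgS : S k @[k --> \oo] --> \sum_i \sum_j u i * u j * expR (t * a i * a j).
  apply: cvg_big => [|i _]; first exact: add_continuous.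
  apply: cvg_big => [|j _]; first exact: add_continuous.
  apply: cvgMl_tmp; exact: is_cvg_series_exp_coeff.
rewrite -(cvg_lim _ cvgS) //; apply: limr_ge; first exact: cvgP cvgS.
apply: nearW => k; rewrite /S /series /=.
under eq_bigr do under eq_bigr do rewrite big_distrr /=.
under eq_bigr do rewrite exchange_big /=.
rewrite exchange_big /=; apply: sumr_ge0 => m _.
by rewrite qform_exp_coeff mulr_ge0 ?sqr_ge0 // divr_ge0 ?exprn_ge0.
Qed.

Lemma psd_gauss n (a : 'I_n -> R) (c : R) : 0 < c ->
  psd (\matrix_(i < n, j < n) expR (- ((a i - a j) ^+ 2) / c)).
Proof.
move=> c_gt0 u; pose v i := u i * expR (- (a i ^+ 2) / c).
suff -> : \sum_i \sum_j u i * u j *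
      (\matrix_(i < n, j < n) expR (- ((a i - a j) ^+ 2) / c)) i j =
    \sum_i \sum_j v i * v j * (\matrix_(i < n, j < n) expR (2 / c * a i * a j)) i j.
  by apply: psd_expR_mul; rewrite divr_ge0 // ltW.
apply: eq_bigr => i _; apply: eq_bigr => j _; rewrite !mxE /v.
have -> : - ((a i - a j) ^+ 2) / c =
    - (a i ^+ 2) / c + - (a j ^+ 2) / c + 2 / c * a i * a j.
  by field; rewrite gt_eqF.
by rewrite !expRD; ring.
Qed.

Lemma psd_gram d N (s : 'I_d -> R) (x : 'I_N -> 'rV[R]_d) :
  (forall k, 0 < s k) -> psd (gram s x).
Proof.
move=> s_gt0 u.
have -> : \sum_i \sum_j u i * u j * gram s x i j = N%:R^-1 * \sum_(k < d)
    \sum_i \sum_j u i * u j *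
      (\matrix_(i < N, j < N) expR (- ((x i 0 k - x j 0 k) ^+ 2) / (2 * s k))) i j.
  rewrite [RHS]big_distrr /=.
  under [RHS]eq_bigr do rewrite big_distrr /=.
  under [RHS]eq_bigr do under eq_bigr do rewrite big_distrr /=.
  rewrite [RHS]exchange_big /=; apply: eq_bigr => i _.
  rewrite [RHS]exchange_big /=; apply: eq_bigr => j _.
  rewrite mxE /addkernel mulr_suml mulr_sumr; apply: eq_bigr => k _.
  rewrite mxE; ring.
rewrite mulr_ge0 ?invr_ge0 ?ler0n //.
by apply: sumr_ge0 => k _; apply: psd_gauss; rewrite mulr_gt0.
Qed.

Lemma sorted_eigenvalues_ge0 N (G : 'M[R]_N) (mu : nat -> R) :
  psd G -> sorted_eigenvalues G mu -> forall l, (0 < l <= N)%N -> 0 <= mu l.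
Proof.
move=> G_psd [_ [U [UUt G_diag]]] l /andP[l_gt0 l_le].
have l_lt : (l.-1 < N)%N by rewrite prednK.
pose i := Ordinal l_lt.
have <- : (U *m G *m U^T) i i = mu l.
  rewrite G_diag !mulmxA UUt mul1mx -!mulmxA UUt mulmx1 !mxE eqxx mulr1n.
  by rewrite /= prednK.
have -> : (U *m G *m U^T) i i = \sum_j1 \sum_j2 U i j1 * U i j2 * G j1 j2.
  rewrite mxE exchange_big /=; apply: eq_bigr => j _.
  by rewrite !mxE big_distrl /=; apply: eq_bigr => k _; ring.
exact: G_psd.
Qed.

End PositiveSemidefinite.

Lemma sum_sqr_le_sqr_sum (R : realDomainType) (I : eqType) (r : seq I) (f : I -> R) :
  (forall i, i \in r -> 0 <= f i) ->
  \sum_(i <- r) f i ^+ 2 <= (\sum_(i <- r) f i) ^+ 2.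
Proof.
elim: r => [|a r IH] f_ge0; first by rewrite !big_nil expr0n.
have fa_ge0 : 0 <= f a by apply: f_ge0; rewrite mem_head.
have f_ge0_r i : i \in r -> 0 <= f i by move=> ir; apply: f_ge0; rewrite inE ir orbT.
have sum_ge0 : 0 <= \sum_(i <- r) f i by rewrite big_seq sumr_ge0.
have := IH f_ge0_r; have := mulr_ge0 fa_ge0 sum_ge0.
rewrite !big_cons !expr2; lra.
Qed.

Section RealBounds.
Variable R : realType.

Lemma sum_expr_tail_le (q : R) (K n : nat) : 0 < q < 1 ->
  \sum_(K <= k < n) q ^+ k <= q ^+ K / (1 - q).
Proof.
move=> /andP[q_gt0 q_lt1]; have [nK|Kn] := leqP n K.
  by rewrite big_geq //; apply: divr_ge0; [exact/exprn_ge0/ltW | lra].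
rewrite -(subnKC (ltnW Kn)) geometric_partial_tail.
by apply: geometric_le_lim; rewrite ?exprn_ge0 ?ltW // gtr0_norm.
Qed.

Lemma sqr_le_expR (x : R) : 0 <= x -> x ^+ 2 / 4 <= expR x.
Proof.
move=> x_ge0; have expR_ge := expR_ge1Dx (x / 2).
have : (1 + x / 2) ^+ 2 <= expR (x / 2) ^+ 2 by rewrite ler_pXn2r ?nnegrE //; lra.
rewrite -expRM_natr; have -> : x / 2 * 2%:R = x by field.
by apply: le_trans; nra.
Qed.

Lemma expRN_half_mul_le (L : R) : 0 < L -> expR (- (L / 2)) * L <= 16 / L.
Proof.
move=> L_gt0; rewrite expRN; set E := expR (L / 2).
have E_gt0 : 0 < E := expR_gt0 _.
have sqr_le : L * L <= 16 * E.
  have := sqr_le_expR (ltW (divr_gt0 L_gt0 (ltr0n R 2))); rewrite -/E.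
  have -> : (L / 2) ^+ 2 / 4 = L * L / 16 by field.
  lra.
have -> : E^-1 * L = L * L / (E * L) by field; rewrite !gt_eqF.
have -> : 16 / L = 16 * E / (E * L) by field; rewrite !gt_eqF.
by rewrite ler_pM2r // invr_gt0 mulr_gt0.
Qed.

Lemma sqrtr_expR_ln (x : R) : 0 < x -> Num.sqrt x = expR (ln x / 2).
Proof. by move=> x_gt0; rewrite -powR12_sqrt ?ltW // /powR gt_eqF // mulrC. Qed.

Lemma ln_nat_ge0 (N : nat) : 0 <= ln (N%:R : R).
Proof. by case: N => [|N]; [rewrite ln0 | rewrite ln_ge0 // ler1n]. Qed.

Lemma cvg_div_ln_nat (C : R) : C / ln n%:R @[n --> \oo] --> 0.
Proof.
have ln_cvgy : ln (n%:R : R) @[n --> \oo] --> +oo.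
  apply/cvgryPge => A; exists (Num.truncn (expR A)).+1 => // n /= n_gt.
  have n_gt_expR : expR A < n%:R by apply: lt_le_trans (truncnS_gt _) _; rewrite ler_nat.
  by rewrite -ler_expR lnK ?ltW // posrE (lt_trans (expR_gt0 A)).
have ln_gt0 : \forall n \near \oo, 0 < ln (n%:R : R) by move/cvgryPgt: ln_cvgy; apply.
by rewrite -(mulr0 C); apply: cvgMl_tmp; apply/(gtr0_cvgV0 ln_gt0).
Qed.

Lemma onem_powR_ge0_le1 (x m : R) : 0 < x <= 1 -> 0 <= m -> 0 <= 1 - x `^ m <= 1.
Proof.
move=> x01 m_ge0; have xm_ge0 := powR_ge0 x m.
have := ger_powR x01 m_ge0; rewrite powRr0 => xm_le1.
by apply/andP; split; lra.
Qed.

Lemma onem_powR_le (x m : R) : 0 < x -> 1 - x `^ m <= - (m * ln x).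
Proof. by move=> x_gt0; rewrite /powR gt_eqF //; have := expR_ge1Dx (m * ln x); lra. Qed.

Section SpectralFilter.
Variables (lam m mu : R).
Hypotheses (lam_gt0 : 0 < lam) (m_ge0 : 0 <= m) (mu_ge0 : 0 <= mu).

Let one_sub_ratio : 1 - mu / (mu + lam) = lam / (mu + lam).
Proof. by field; rewrite gt_eqF // ltr_wpDl. Qed.

Let ratio_gt0_le1 : 0 < lam / (mu + lam) <= 1.
Proof. by rewrite divr_gt0 ?ltr_wpDl //= ler_pdivrMr ?ltr_wpDl // mul1r lerDr. Qed.

Lemma spectral_filter_ge0_le1 : 0 <= 1 - (1 - mu / (mu + lam)) `^ m <= 1.
Proof. by rewrite one_sub_ratio onem_powR_ge0_le1. Qed.

Lemma spectral_filter_le : 1 - (1 - mu / (mu + lam)) `^ m <= m / lam * mu.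
Proof.
rewrite one_sub_ratio; have /andP[x_gt0 _] := ratio_gt0_le1.
apply: le_trans (onem_powR_le _ x_gt0) _.
rewrite -mulrN -lnV ?posrE // invf_div mulrAC -mulrA ler_wpM2l //.
have -> : (mu + lam) / lam = 1 + mu / lam by field; rewrite gt_eqF.
by rewrite le_ln1Dx // (lt_le_trans (ltrN10 R)) // divr_ge0 // ltW.
Qed.

Lemma spectral_filter_sqr_le1 : (1 - (1 - mu / (mu + lam)) `^ m) ^+ 2 <= 1.
Proof. by have /andP[f_ge0 f_le1] := spectral_filter_ge0_le1; rewrite exprn_ile1. Qed.

Lemma spectral_filter_sqr_le :
  (1 - (1 - mu / (mu + lam)) `^ m) ^+ 2 <= (m / lam) ^+ 2 * mu ^+ 2.
Proof.
have /andP[f_ge0 _] := spectral_filter_ge0_le1.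
by rewrite -exprMn ler_pXn2r ?nnegrE ?spectral_filter_le // (le_trans f_ge0 spectral_filter_le).
Qed.

End SpectralFilter.

End RealBounds.

Section EffectiveQuantity.
Variables (R : realType) (lam m : R) (N : nat) (mu : nat -> R).
Hypotheses (lam_gt0 : 0 < lam) (m_ge0 : 0 <= m).
Hypothesis mu_ge0 : forall l, (0 < l <= N)%N -> 0 <= mu l.

Lemma effquant_le_sqrt : effquant lam m N mu <= Num.sqrt N%:R.
Proof.
have [->|N_gt0] := posnP N; first by rewrite /effquant big_geq // mulr0 sqrtr0.
have sqrtN_gt0 : 0 < Num.sqrt (N%:R : R) by rewrite sqrtr_gt0 ltr0n.
rewrite /effquant mulrC ler_pdivrMr // -expr2 sqr_sqrtr ?ler0n //.
apply: le_trans (ler_sum_nat (G := fun=> 1) _) _ => [l /andP[l_gt0 l_le]|].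
  by apply: spectral_filter_sqr_le1 => //; apply: mu_ge0; rewrite l_gt0 -ltnS.
by rewrite sumr_const_nat subSS subn0.
Qed.

Lemma effquant_le_split (K : nat) : (0 < K <= N)%N ->
  effquant lam m N mu <=
    (Num.sqrt N%:R)^-1 * (K%:R + (m / lam) ^+ 2 * (\sum_(K <= k < N.+1) mu k) ^+ 2).
Proof.
move=> /andP[K_gt0 K_le].
have mu_ge0_tail l : (K <= l < N.+1)%N -> 0 <= mu l.
  by move=> /andP[K_le_l l_lt]; rewrite mu_ge0 // (leq_trans K_gt0 K_le_l) -ltnS.
rewrite /effquant (big_cat_nat (n := K)) //= ?(leq_trans K_le) //.
rewrite ler_wpM2l ?invr_ge0 ?sqrtr_ge0 // lerD //.
  apply: le_trans (ler_sum_nat (G := fun=> 1) _) _ => [l /andP[l_gt0 l_lt]|].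
    by rewrite spectral_filter_sqr_le1 // mu_ge0 // l_gt0 (leq_trans (ltnW l_lt)).
  by rewrite sumr_const_nat ler_nat leq_subr.
apply: le_trans (ler_sum_nat (G := fun l => (m / lam) ^+ 2 * mu l ^+ 2) _) _.
  by move=> l /mu_ge0_tail mu_l_ge0; rewrite spectral_filter_sqr_le.
rewrite -mulr_sumr ler_wpM2l ?sqr_ge0 //.
by apply: sum_sqr_le_sqr_sum => l; rewrite mem_index_iota; apply: mu_ge0_tail.
Qed.

End EffectiveQuantity.

Section Asymptotics.
Variables (R : realType) (lam Cu Cd : R).
Hypotheses (lam_gt0 : 0 < lam) (Cu_gt0 : 0 < Cu) (Cd_ge0 : 0 <= Cd).

(* m(N) = N^a, and the tail contribution decays like N^(-b). *)
Local Notation D := (2 * Cd + 1).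
Local Notation a := (4^-1 * ((Cu + Cd + 2^-1) / (Cd + 1))).
Local Notation b := ((2^-1 + Cu) / (2 * Cd + 2)).
Local Notation q := (expR (- Cu)).

Let D_gt0 : 0 < D. Proof. by move: Cd_ge0; lra. Qed.
Let b_gt0 : 0 < b. Proof. by apply: divr_gt0; move: Cu_gt0 Cd_ge0; lra. Qed.
Let q_gt0 : 0 < q. Proof. exact: expR_gt0. Qed.
Let q_lt1 : q < 1. Proof. by move: Cu_gt0; rewrite -expR0 ltr_expR; lra. Qed.
Let E_gt0 : 0 < lam ^+ 2 * (1 - q) ^+ 2.
Proof. by rewrite mulr_gt0 // exprn_gt0 // subr_gt0. Qed.

Lemma K0_le_ln N : (K0 Cd N)%:R <= ln N%:R / D.
Proof. by rewrite /K0 truncn_le divr_ge0 ?ln_nat_ge0 // ltW. Qed.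

Lemma ln_lt_K0 N : ln N%:R / D - 1 < (K0 Cd N)%:R.
Proof. by rewrite /K0 ltrBlDr natr1 truncnS_gt. Qed.

Lemma tail_exponent_le (L K : R) : 0 <= L -> L / D - 1 < K ->
  - (L / 2) + 2 * (a * L) - 2 * (Cu * K) <= 2 * Cu - b * L.
Proof.
move=> L_ge0 K_gt.
have {K_gt}K_lower : 2 * Cu * (L / D - 1) < 2 * Cu * K.
  by rewrite ltr_pM2l // mulr_gt0.
have coef_eq : 2 * a - 2^-1 + b = 2 * Cu / (2 * Cd + 2).
  by field; rewrite !gt_eqF //; move: Cd_ge0; lra.
have coef_le : 2 * Cu / (2 * Cd + 2) <= 2 * Cu / D.
  by rewrite ler_pM2l ?mulr_gt0 // lef_pV2 ?posrE; move: Cd_ge0; lra.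
have {coef_eq}expo_eq : - (L / 2) + 2 * (a * L) + b * L = L * (2 * Cu / (2 * Cd + 2)).
  by rewrite -coef_eq; ring.
have {L_ge0 coef_le} := ler_wpM2l L_ge0 coef_le.
have -> : L * (2 * Cu / D) = 2 * Cu * (L / D) by ring.
lra.
Qed.

Lemma tail_term_le (L K : R) : 0 < L -> L / D - 1 < K ->
  expR (- (L / 2)) * ((expR (a * L) / lam) ^+ 2 * (expR (- (Cu * K)) / (1 - q)) ^+ 2)
  <= expR (2 * Cu) / (lam ^+ 2 * (1 - q) ^+ 2 * b) / L.
Proof.
move=> L_gt0 K_gt; set E := lam ^+ 2 * (1 - q) ^+ 2.
have -> : expR (- (L / 2)) * ((expR (a * L) / lam) ^+ 2 * (expR (- (Cu * K)) / (1 - q)) ^+ 2)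
    = expR (- (L / 2) + 2 * (a * L) - 2 * (Cu * K)) / E.
  rewrite expRB expRD ![2 * _]mulrC !expRM_natr (expRN (L / 2)) (expRN (Cu * K)) /E.
  by field; rewrite !gt_eqF ?expR_gt0 ?subr_gt0.
apply: le_trans (_ : expR (2 * Cu - b * L) / E <= _).
  by rewrite ler_pM2r ?invr_gt0 // ler_expR tail_exponent_le // ltW.
have -> : expR (2 * Cu - b * L) / E = expR (2 * Cu) / E / expR (b * L).
  by rewrite expRB mulrAC.
have -> : expR (2 * Cu) / (E * b) / L = expR (2 * Cu) / E / (b * L).
  by rewrite invfM mulrA -mulrA -invfM.
have bL_gt0 : 0 < b * L by rewrite mulr_gt0.
rewrite ler_pM2l ?divr_gt0 ?expR_gt0 // lef_pV2 ?posrE ?expR_gt0 //.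
by have := expR_ge1Dx (b * L); lra.
Qed.

Lemma K0_lt N : (0 < N)%N -> (K0 Cd N < N)%N.
Proof.
move=> N_gt0; rewrite -(ltr_nat R); apply: le_lt_trans (K0_le_ln N) _.
apply: le_lt_trans (ln_sublinear _); last by rewrite ltr0n.
rewrite ler_pdivrMr // ler_peMr ?ln_nat_ge0 //.
by move: Cd_ge0; lra.
Qed.

Lemma effquant_le_K0_gt0 N mu : (0 < K0 Cd N)%N ->
  (forall l, (0 < l <= N)%N -> 0 <= mu l) ->
  \sum_(K0 Cd N <= k < N.+1) mu k <= \sum_(K0 Cd N <= k < N.+1) expR (- (Cu * k%:R)) ->
  effquant lam (mN Cu Cd N) N mu <=
    (16 / D + expR (2 * Cu) / (lam ^+ 2 * (1 - q) ^+ 2 * b)) / ln N%:R.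
Proof.
move=> K_gt0 mu_ge0 tail_le; set L := ln (N%:R : R); set K := K0 Cd N.
have K_le : K%:R <= L / D := K0_le_ln N.
have L_gt0 : 0 < L.
  have : 1 <= L / D by apply: le_trans K_le; rewrite ler1n.
  by rewrite ler_pdivlMr // mul1r; apply: lt_le_trans.
have N_gt0 : (0 < N)%N.
  by rewrite lt0n; apply/eqP => N0; move: L_gt0; rewrite /L N0 ln0 ?ltxx.
have Npos : (0 : R) < N%:R by rewrite ltr0n.
have m_eq : mN Cu Cd N = expR (a * L) by rewrite /mN /powR gt_eqF.
have S_le : \sum_(K <= k < N.+1) mu k <= expR (- (Cu * K%:R)) / (1 - q).
  apply: le_trans tail_le _; rewrite -mulNr expRM_natr.
  under eq_bigr do rewrite -mulNr expRM_natr.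
  by apply: sum_expr_tail_le; rewrite q_gt0 q_lt1.
have S_ge0 : 0 <= \sum_(K <= k < N.+1) mu k.
  rewrite big_nat sumr_ge0 // => l /andP[K_le_l l_lt].
  by rewrite mu_ge0 // (leq_trans K_gt0 K_le_l) -ltnS.
have m_ge0 : 0 <= mN Cu Cd N := powR_ge0 _ _.
apply: le_trans (effquant_le_split lam_gt0 m_ge0 mu_ge0 (K := K) _) _.
  by rewrite K_gt0 ltnW // K0_lt.
rewrite sqrtr_expR_ln // -expRN m_eq mulrDr [leRHS]mulrDl lerD //.
  apply: le_trans (_ : expR (- (L / 2)) * (L / D) <= _).
    by rewrite ler_wpM2l ?expR_ge0.
  by rewrite mulrA [16 / D / L]mulrAC ler_pM2r ?invr_gt0 // expRN_half_mul_le.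
apply: le_trans (tail_term_le L_gt0 (ln_lt_K0 N)).
by rewrite !ler_wpM2l ?expR_ge0 ?sqr_ge0 // ler_pXn2r ?nnegrE ?(le_trans S_ge0).
Qed.

(* For K0 = 0 the tail hypothesis involves the meaningless value mu 0, so it
   is not used: instead ln N < 2 Cd + 1 bounds N. *)
Lemma effquant_le_K0_eq0 N mu : (1 < N)%N -> K0 Cd N = 0%N ->
  (forall l, (0 < l <= N)%N -> 0 <= mu l) ->
  effquant lam (mN Cu Cd N) N mu <= expR (D / 2) * D / ln N%:R.
Proof.
move=> N_gt1 K0_eq0 mu_ge0; set L := ln (N%:R : R).
have L_gt0 : 0 < L by rewrite ln_gt0 // ltr1n.
have L_lt_D : L < D.
  by have := ln_lt_K0 N; rewrite K0_eq0 mulr0n subr_lt0 ltr_pdivrMr // mul1r.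
apply: le_trans (effquant_le_sqrt lam_gt0 (powR_ge0 _ _) mu_ge0) _.
rewrite sqrtr_expR_ln ?ltr0n ?(ltn_trans _ N_gt1) // ler_pdivlMr //.
by rewrite ler_pM ?expR_ge0 ?ltW // ltr_expR ltr_pM2r.
Qed.

Lemma effquant_le_div_ln : exists C : R, forall N mu, (1 < N)%N ->
  (forall l, (0 < l <= N)%N -> 0 <= mu l) ->
  \sum_(K0 Cd N <= k < N.+1) mu k <= \sum_(K0 Cd N <= k < N.+1) expR (- (Cu * k%:R)) ->
  effquant lam (mN Cu Cd N) N mu <= C / ln N%:R.
Proof.
set C1 := 16 / D + expR (2 * Cu) / (lam ^+ 2 * (1 - q) ^+ 2 * b).
have C1_ge0 : 0 <= C1.
  apply: addr_ge0; apply: divr_ge0; rewrite ?expR_ge0 // ltW //.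
  exact: mulr_gt0.
have C2_ge0 : 0 <= expR (D / 2) * D by rewrite mulr_ge0 ?expR_ge0 ?ltW.
exists (C1 + expR (D / 2) * D) => N mu N_gt1 mu_ge0 tail_le.
have L_gt0 : 0 < ln (N%:R : R) by rewrite ln_gt0 // ltr1n.
rewrite mulrDl; have [K0_eq0|K0_gt0] := posnP (K0 Cd N).
  apply: le_trans (effquant_le_K0_eq0 N_gt1 K0_eq0 mu_ge0) _.
  by rewrite lerDr divr_ge0 // ltW.
apply: le_trans (effquant_le_K0_gt0 K0_gt0 mu_ge0 tail_le) _.
by rewrite lerDl divr_ge0 // ltW.
Qed.

End Asymptotics.

Theorem lemma7 (R : realType) (lam Cu Cd : R) (d : nat) (s : 'I_d -> R) :
  0 < lam -> 0 < Cu -> Cu < Cd -> (forall j, 0 < s j) ->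
  exists eps : nat -> R, eps @ \oo --> 0 /\
    forall (N : nat) (x : 'I_N -> 'rV[R]_d) (mu : nat -> R),
      sorted_eigenvalues (gram s x) mu ->
      \sum_(K0 Cd N <= k < N.+1) mu k
        <= \sum_(K0 Cd N <= k < N.+1) expR (- (Cu * k%:R)) ->
      expR (- (Cd * (K0 Cd N)%:R)) <= mu (K0 Cd N) ->
      effquant lam (mN Cu Cd N) N mu <= eps N.
Proof.
move=> lam_gt0 Cu_gt0 Cu_lt_Cd s_gt0.
have Cd_ge0 : 0 <= Cd by rewrite ltW // (lt_trans Cu_gt0 Cu_lt_Cd).
have [C effquant_le] := effquant_le_div_ln lam_gt0 Cu_gt0 Cd_ge0.
(* For N <= 1, ln N = 0 and C / ln N is 0, which bounds nothing. *)
exists (fun N => if (N <= 1)%N then 1 else C / ln N%:R); split.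
  apply: cvg_trans (cvg_div_ln_nat C); apply: near_eq_cvg.
  by exists 2%N => // N /= N_gt1; rewrite leqNgt N_gt1.
move=> N x mu mu_sorted tail_le _.
have mu_ge0 := sorted_eigenvalues_ge0 (psd_gram x s_gt0) mu_sorted.
case: leqP => [N_le1|N_gt1]; last exact: effquant_le.
apply: le_trans (effquant_le_sqrt lam_gt0 (powR_ge0 _ _) mu_ge0) _.
by rewrite -[leRHS]sqrtr1 ler_wsqrtr // lern1.
Qed.
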